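(* Let $\Sigma$ be a signed graph whose underlying graph is cubic and has girth at least $4$. Then $l(\Sigma) \leq \frac{3}{8}|V(\Sigma)|$.
   Context: A signed graph $\Sigma = (G,\sigma)$ consists of a finite graph $G$ and a sign function $\sigma: E(G) \to \{+1,-1\}$. A circle is a connected nonempty $2$-regular subgraph (loops count as circles of length $1$ and pairs of parallel edges as circles of length $2$, so girth at least $4$ means $G$ has no loops, no multiple edges and no triangles). A circle is positive if the product of the signs of its edges is $+1$ and negative otherwise; $\Sigma$ is balanced if all its circles are positive. The frustration index $l(\Sigma)$ is the smallest number of edges whose deletion from $\Sigma$ leaves a balanced signed graph. Cubic means every vertex has degree exactly $3$. *)

From mathcomp Require Import all_boot all_order all_algebra.
Set Implicit Arguments. Unset Strict Implicit. Unset Printing Implicit Defensive.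
Import GRing.Theory Num.Theory.

Definition simple_graph (V : finType) (adj : rel V) : Prop :=
  symmetric adj /\ irreflexive adj.

Definition edges (V : finType) (adj : rel V) : {set {set V}} :=
  [set A : {set V} | [exists u, exists v, adj u v && (A == [set u; v])]].

Definition cubic (V : finType) (adj : rel V) : Prop :=
  forall v : V, #|[set u | adj v u]| = 3.

Definition degC (V : finType) (C : {set {set V}}) (v : V) : nat :=
  #|[set A in C | v \in A]|.

(* A circle: a nonempty, connected, 2-regular subgraph, given by its edge set
   C (vertices = those covered by C).  Connectedness is expressed via
   connectivity of edges sharing a vertex. *)
Definition circle (V : finType) (adj : rel V) (C : {set {set V}}) : bool :=
  [&& C \subset edges adj, C != set0,
      [forall v : V, (degC C v == 0) || (degC C v == 2)] &
      [forall A in C, forall B in C,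
        connect [rel X Y | [&& X \in C, Y \in C & X :&: Y != set0]] A B]].

Definition girth_ge4 (V : finType) (adj : rel V) : Prop :=
  forall C, circle adj C -> 4 <= #|C|.

Definition sign_fun (V : finType) (adj : rel V) (sigma : {set V} -> int) : Prop :=
  forall A, A \in edges adj -> sigma A = 1%R \/ sigma A = (-1)%R.

Definition positive_circle (V : finType) (sigma : {set V} -> int)
  (C : {set {set V}}) : bool :=
  (\prod_(A in C) sigma A == 1)%R.

Definition balanced_after_deletion (V : finType) (adj : rel V)
  (sigma : {set V} -> int) (D : {set {set V}}) : bool :=
  [forall C : {set {set V}},
     (circle adj C && [disjoint C & D]) ==> positive_circle sigma C].

Definition frustration_index (V : finType) (adj : rel V)
  (sigma : {set V} -> int) : nat :=
  \big[minn/#|edges adj|]_(D : {set {set V}} |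
      (D \subset edges adj) &&
      balanced_after_deletion adj sigma D) #|D|.

From mathcomp Require Import all_boot all_order all_algebra zify.
Set Implicit Arguments. Unset Strict Implicit. Unset Printing Implicit Defensive.
Import Order.TTheory GRing.Theory.

(* Pick a switching of the signature that minimises the number of frustrated
   edges (edges that are negative after switching) and let d(v) count those at v.
   Switching a single vertex shows d(v) <= 1.  Switching a vertex with d(v) = 1
   together with its two other, non-adjacent, neighbours shows that it has a
   neighbour w with d(w) = 0.  Each vertex having three neighbours, at most 3/4 of
   the vertices have d = 1, and the frustrated edges, half as many, form a set
   whose deletion leaves a balanced signed graph. *)

Lemma card_set_sum (T : finType) (P : pred T) : #|[set x | P x]| = \sum_x (P x : nat).
Proof. by rewrite -sum1dep_card big_mkcond; apply: eq_bigr => x _; case: (P x). Qed.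

Lemma sum_card_incidence (T : finType) (F : {set {set T}}) :
  \sum_(A in F) #|A| = \sum_x #|[set A in F | x \in A]|.
Proof.
have card_sum (A : {set T}) : #|A| = \sum_x (x \in A : nat).
  by rewrite -cardsE card_set_sum.
under eq_bigr do rewrite card_sum; rewrite exchange_big; apply: eq_bigr => x _.
by rewrite -sum1dep_card big_mkcondr; apply: eq_bigr => A _; case: (x \in A).
Qed.

Lemma big_set3 (T : finType) (F : T -> nat) a b c : a != b -> a != c -> b != c ->
  \sum_(x in [set a; b; c]) F x = F a + F b + F c.
Proof.
move=> ab ac bc; rewrite -setUA big_setU1 ?big_setU1 ?big_set1 /= ?addnA //.
all: by rewrite !inE ?negb_or ?ab ?ac ?bc.
Qed.

Lemma card_set3_le (T : finType) (x y z : T) : #|[set x; y; z]| <= 3.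
Proof.
apply: leq_trans (leq_card_setU _ _).1 _.
by rewrite cards1 addn1 ltnS cards2; case: (_ != _).
Qed.

Lemma dominated_card_le (T : finType) (adj : rel T) (B : {set T}) d :
  symmetric adj -> (forall v, #|[set w | adj v w]| <= d) ->
  (forall v, v \in B -> exists2 w, adj v w & w \notin B) ->
  d.+1 * #|B| <= d * #|T|.
Proof.
move=> adj_sym deg_le dom.
have out_edges : #|B| <= \sum_(v in B) \sum_(w in ~: B) (adj v w : nat).
  rewrite -sum1_card; apply: leq_sum => v vB; have [w vw wB] := dom v vB.
  by rewrite (bigD1 w) ?inE //= vw.
have in_edges : \sum_(v in B) \sum_(w in ~: B) (adj v w : nat) <= d * #|~: B|.
  rewrite exchange_big /= mulnC -sum_nat_const; apply: leq_sum => w _.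
  apply: leq_trans (deg_le w); rewrite card_set_sum /=.
  by rewrite big_mkcond; apply: leq_sum => v _; rewrite adj_sym; case: (v \in B).
by rewrite -(cardsC B) mulSn mulnDr addnC leq_add2l (leq_trans out_edges).
Qed.

Section SimpleGraph.
Variables (V : finType) (adj : rel V).
Hypotheses (adj_sym : symmetric adj) (adj_irr : irreflexive adj).

Lemma adj_neq x y : adj x y -> x != y.
Proof. by apply: contraTneq => ->; rewrite adj_irr. Qed.

Lemma edge_in_edges x y : adj x y -> [set x; y] \in edges adj.
Proof.
by move=> xy; rewrite inE; apply/existsP; exists x; apply/existsP; exists y; rewrite xy eqxx.
Qed.

Lemma triangle_circle a b c : adj a b -> adj b c -> adj c a ->
  circle adj [set [set a; b]; [set b; c]; [set c; a]].
Proof.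
move=> ab bc ca; have nab := adj_neq ab; have nbc := adj_neq bc; have nca := adj_neq ca.
set e1 := [set a; b]; set e2 := [set b; c]; set e3 := [set c; a].
have neq_by (u : V) (A B : {set V}) : u \in A -> u \notin B -> A != B.
  by move=> uA; apply: contraNneq => <-.
have e12 : e1 != e2 by apply: (neq_by a); rewrite !inE ?eqxx // negb_or nab eq_sym.
have e13 : e1 != e3 by apply: (neq_by b); rewrite !inE ?eqxx ?orbT // negb_or nbc eq_sym.
have e23 : e2 != e3 by apply: (neq_by b); rewrite !inE ?eqxx // negb_or nbc eq_sym.
have memT A : (A \in [set e1; e2; e3]) = [|| A == e1, A == e2 | A == e3].
  by rewrite !inE orbA.
apply/and4P; split.
- by apply/subsetP => A; rewrite memT => /or3P [] /eqP ->; apply: edge_in_edges.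
- by apply/set0Pn; exists e1; rewrite memT eqxx.
- apply/forallP => v; rewrite /degC card_set_sum.
  have -> : \sum_A ((A \in [set e1; e2; e3]) && (v \in A) : nat) =
            (v \in e1) + (v \in e2) + (v \in e3).
    rewrite -(big_set3 (fun A : {set V} => (v \in A : nat))) // [RHS]big_mkcond.
    by apply: eq_bigr => A _; case: (A \in _).
  have nac : a != c by rewrite eq_sym.
  rewrite !inE; have [->|_] := eqVneq v a; first by rewrite (negbTE nab) (negbTE nac).
  have [->|_] := eqVneq v b; first by rewrite (negbTE nbc).
  by case: (v == c).
- apply/forallP => A; apply/implyP => TA; apply/forallP => B; apply/implyP => TB.
  apply: connect1; rewrite /= TA TB /=.
  move: TA TB; rewrite !memT => /or3P [] /eqP -> /or3P [] /eqP ->; apply/set0Pn;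
    [ exists a | exists b | exists a | exists b | exists b | exists c
    | exists a | exists c | exists c ]; by rewrite !inE eqxx ?orbT.
Qed.

Lemma cubic_other_nbrs : cubic adj -> forall v u, adj v u ->
  exists w1 w2, w1 != w2 /\ forall y, (y != u) && adj v y = (y == w1) || (y == w2).
Proof.
move=> adj_cubic v u vu.
have [w1 [w2 [w12 defN]]] :
    exists w1 w2, w1 != w2 /\ [set y | adj v y] :\ u = [set w1; w2].
  by apply/cards2P; move: (adj_cubic v); rewrite (cardsD1 u) inE vu add1n => -[->].
by exists w1, w2; split=> // y; move/setP: defN => /(_ y); rewrite !inE.
Qed.

Lemma girth4_nbrs_nonadj : girth_ge4 adj ->
  forall v x y, adj v x -> adj v y -> ~~ adj x y.
Proof.
move=> girth v x y vx vy; apply/negP => xy.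
have := girth _ (triangle_circle vx xy (_ : adj y v)).
by rewrite adj_sym vy leqNgt ltnS card_set3_le => /(_ isT).
Qed.

End SimpleGraph.

Lemma frustration_index_le (V : finType) (adj : rel V) (sigma : {set V} -> int)
    (D : {set {set V}}) :
  D \subset edges adj -> balanced_after_deletion adj sigma D ->
  frustration_index adj sigma <= #|D|.
Proof.
move=> sub bal; rewrite /frustration_index -minEnat.
by apply: (@bigmin_le_cond _ _ _ #|edges adj| D); rewrite sub bal.
Qed.

Section Switching.
Variables (V : finType) (adj : rel V) (sigma : {set V} -> int).
Implicit Types (s : {ffun V -> bool}) (S : {set V}).

(* [s] switches the vertices where it is [true]; [frustrated s x y] says that
   the edge xy is negative after switching. *)
Definition frustrated s x y : bool := (sigma [set x; y] == (-1)%R) (+) s x (+) s y.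

Definition frustrated_deg s x : nat := \sum_y (adj x y && frustrated s x y : nat).

(* Every frustrated edge is counted twice, once from each endpoint. *)
Definition frustration_count s : nat := \sum_x frustrated_deg s x.

Definition switch S s : {ffun V -> bool} := [ffun x => s x (+) (x \in S)].

Definition cut_count S (P : rel V) : nat :=
  \sum_x \sum_y [&& x \in S, y \notin S, adj x y & P x y].

Definition frustrated_edges s : {set {set V}} :=
  [set [set x; y] | x : V, y : V in [set y | adj x y && frustrated s x y]].

Lemma frustratedC s x y : frustrated s x y = frustrated s y x.
Proof. by rewrite /frustrated setUC addbAC. Qed.

Lemma cut_countE S P :
  cut_count S P = \sum_(x in S) \sum_y [&& y \notin S, adj x y & P x y].
Proof.
by rewrite [RHS]big_mkcond; apply: eq_bigr => x _; case: ifP => _ //; rewrite big1.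
Qed.

Lemma frustrated_out_gt0 S s x y : y \notin S -> adj x y -> frustrated s x y ->
  0 < \sum_z [&& z \notin S, adj x z & frustrated s x z].
Proof. by move=> yS xy fxy; rewrite (bigD1 y) //= yS xy fxy. Qed.

Lemma frustrated_edges_sub s : frustrated_edges s \subset edges adj.
Proof.
apply/subsetP => A /imset2P [x y _]; rewrite inE => /andP [xy _] ->.
exact: edge_in_edges.
Qed.

Hypothesis adj_sym : symmetric adj.

(* Switching S changes the sign of exactly the edges leaving S. *)
Lemma frustration_count_switch S s :
  frustration_count (switch S s) + 2 * cut_count S (frustrated s) =
  frustration_count s + 2 * cut_count S (fun x y => ~~ frustrated s x y).
Proof.
have cut_flip P : cut_count S P = \sum_x \sum_y [&& y \in S, x \notin S, adj y x & P y x].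
  by rewrite /cut_count exchange_big.
rewrite !mul2n -!addnn [in X in _ + (_ + X) = _]cut_flip [in X in _ = _ + (_ + X)]cut_flip.
rewrite /frustration_count /cut_count.
rewrite -!big_split; apply: eq_bigr => x _; rewrite -!big_split; apply: eq_bigr => y _.
rewrite /= (adj_sym y x) (frustratedC s y x) /frustrated !ffunE.
by case: (x \in S); case: (y \in S); case: (adj x y); case: (s x); case: (s y); case: (_ == _).
Qed.

Hypothesis adj_irr : irreflexive adj.

Lemma card_frustrated_edges s : 2 * #|frustrated_edges s| <= frustration_count s.
Proof.
have card2 A : A \in frustrated_edges s -> #|A| = 2.
  case/imset2P => x y _; rewrite inE => /andP [xy _] ->.
  by rewrite cards2 (adj_neq adj_irr xy).
rewrite mulnC -sum_nat_const -(eq_bigr _ card2) sum_card_incidence.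
apply: leq_sum => v _.
have incident_sub : [set A in frustrated_edges s | v \in A] \subset
    [set [set v; y] | y in [set y | adj v y && frustrated s v y]].
  apply/subsetP => A; rewrite inE => /andP [/imset2P [x y _ + ->]].
  rewrite !inE => /andP [xy fxy] /orP [] /eqP ->.
  - by apply: imset_f; rewrite inE xy fxy.
  - by apply/imsetP; exists x; rewrite ?inE 1?adj_sym ?xy 1?frustratedC ?fxy // setUC.
apply: leq_trans (subset_leq_card incident_sub) _.
by apply: leq_trans (leq_imset_card _ _) _; rewrite card_set_sum.
Qed.

(* An edge kept after deletion has sign t x * t y, with t v = (-1) ^+ s v, so
   the sign of a circle is a product of the t v ^+ 2. *)
Lemma frustrated_edges_balance s :
  sign_fun adj sigma -> balanced_after_deletion adj sigma (frustrated_edges s).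
Proof.
move=> sgn; apply/forallP => C; apply/implyP => /andP [/and4P [sub _ /forallP deg _] disj].
pose t v : int := ((-1) ^+ s v)%R.
have sigma_t A : A \in C -> sigma A = (\prod_(v in A) t v)%R.
  move=> AC; have AE := subsetP sub A AC.
  move: (AE); rewrite inE => /existsP [x /existsP [y /andP [xy /eqP defA]]].
  have nfxy : ~~ frustrated s x y.
    apply: contraFN (disjointFr disj AC) => fxy.
    by rewrite defA; apply: imset2_f; rewrite ?inE ?xy.
  rewrite defA big_setU1 ?big_set1 /= ?inE ?(adj_neq adj_irr xy) //.
  move: nfxy; rewrite /frustrated /t.
  by rewrite -defA; case: (sgn _ AE) => ->; case: (s x); case: (s y).
rewrite /positive_circle (eq_bigr _ sigma_t).
have -> : (\prod_(A in C) \prod_(v in A) t v = \prod_v t v ^+ degC C v)%R.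
  transitivity (\prod_v \prod_(A in C) (if v \in A then t v else 1))%R.
    by rewrite exchange_big /=; apply: eq_bigr => A _; rewrite big_mkcond.
  apply: eq_bigr => v _; rewrite -big_mkcondr /degC -prodr_const.
  by apply: eq_bigl => A; rewrite inE.
by apply/eqP/big1 => v _; case/orP: (deg v) => /eqP ->; rewrite /t; case: (s v).
Qed.

Section MinimalSwitching.
Hypothesis adj_cubic : cubic adj.
Hypothesis adj_triangle_free : forall v x y, adj v x -> adj v y -> ~~ adj x y.
Variable s : {ffun V -> bool}.
Hypothesis s_min : forall f, frustration_count s <= frustration_count f.

Lemma cut_count_min S :
  cut_count S (frustrated s) <= cut_count S (fun x y => ~~ frustrated s x y).
Proof. by have := frustration_count_switch S s; have := s_min (switch S s); lia. Qed.

Lemma frustrated_deg_compl x :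
  frustrated_deg s x + \sum_y (adj x y && ~~ frustrated s x y : nat) = 3.
Proof.
rewrite -(adj_cubic x) card_set_sum -big_split; apply: eq_bigr => y _.
by case: (adj x y); case: (frustrated s x y).
Qed.

Lemma frustrated_deg_le1 x : frustrated_deg s x <= 1.
Proof.
have cut1 P : cut_count [set x] P = \sum_y (adj x y && P x y : nat).
  rewrite cut_countE big_set1; apply: eq_bigr => y _; rewrite inE.
  by have [->|] := eqVneq y x; rewrite ?adj_irr.
have := cut_count_min [set x]; rewrite !cut1.
by have := frustrated_deg_compl x; rewrite /frustrated_deg; lia.
Qed.

Lemma frustrated_nbr_unique x y z :
  adj x y -> frustrated s x y -> adj x z -> frustrated s x z -> y = z.
Proof.
move=> xy fxy xz fxz; apply/eqP; apply: contraTT (frustrated_deg_le1 x) => yz.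
rewrite -ltnNge /frustrated_deg (bigD1 y) ?xy ?fxy //= (bigD1 z) /= ?xz ?fxz //.
by rewrite eq_sym yz.
Qed.

Lemma unfrustrated_other_nbr v u w :
  adj v u -> frustrated s v u -> adj v w -> w != u -> ~~ frustrated s w v.
Proof.
move=> vu fvu vw; rewrite frustratedC; apply: contra => fvw.
by rewrite (frustrated_nbr_unique vu fvu vw fvw).
Qed.

Lemma frustrated_deg_gt0 x :
  0 < frustrated_deg s x -> exists2 y, adj x y & frustrated s x y.
Proof.
case: (pickP [pred y | adj x y && frustrated s x y]) => [y /andP [] | none].
  by exists y.
by rewrite /frustrated_deg big1 // => y _; have := none y; rewrite /= => ->.
Qed.

Lemma unfrustrated_out_le1 S w x :
  0 < frustrated_deg s w -> x \in S -> adj w x -> ~~ frustrated s w x ->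
  \sum_y [&& y \notin S, adj w y & ~~ frustrated s w y] <= 1.
Proof.
move=> dw xS wx nfwx.
have out_in : \sum_y [&& y \notin S, adj w y & ~~ frustrated s w y] +
              \sum_y [&& y \in S, adj w y & ~~ frustrated s w y] =
              \sum_y (adj w y && ~~ frustrated s w y : nat).
  by rewrite -big_split; apply: eq_bigr => y _; case: (y \in S); rewrite /= ?addn0.
have in_pos : 0 < \sum_y [&& y \in S, adj w y & ~~ frustrated s w y].
  by rewrite (bigD1 x) //= xS wx nfwx.
by have := frustrated_deg_compl w; lia.
Qed.

(* Were every neighbour of v frustrated, then with uv the frustrated edge at v and
   w1, w2 the other neighbours, switching S = {v, w1, w2} would make the three
   frustrated edges leaving S positive and at most two positive ones negative. *)
Lemma frustrated_deg0_nbr v :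
  0 < frustrated_deg s v -> exists2 w, adj v w & frustrated_deg s w = 0.
Proof.
move=> dv; case: (boolP [exists w, adj v w && (frustrated_deg s w == 0)]).
  by case/existsP => w /andP [vw /eqP]; exists w.
move/existsPn => no_free; have nbr_pos w : adj v w -> 0 < frustrated_deg s w.
  by move=> vw; have := no_free w; rewrite vw lt0n.
have [u vu fvu] := frustrated_deg_gt0 dv.
have [w1 [w2 [w12 other_nbr]]] := cubic_other_nbrs adj_cubic vu.
have := other_nbr w1; rewrite eqxx => /andP [w1u vw1].
have := other_nbr w2; rewrite eqxx orbT => /andP [w2u vw2].
set S := [set v; w1; w2].
have vS : v \in S by rewrite !inE eqxx.
have uS : u \notin S.
  by rewrite !inE !negb_or eq_sym (adj_neq adj_irr vu) /= eq_sym w1u eq_sym w2u.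
have out_of_S w y : adj v w -> w != u -> adj w y -> frustrated s w y -> y \notin S.
  move=> vw wu wy fwy; rewrite !inE -orbA negb_or -other_nbr.
  have yv : y != v.
    by apply: contraNneq (unfrustrated_other_nbr vu fvu vw wu) => <-.
  rewrite yv /=; apply/negP => /andP [_ vy].
  by have := adj_triangle_free vw vy; rewrite wy.
have v_good_out : \sum_y [&& y \notin S, adj v y & ~~ frustrated s v y] = 0.
  apply: big1 => y _; apply/eqP; rewrite eqb0; apply/and3P => -[yS vy nfvy].
  have yu : y != u by apply: contraNneq nfvy => ->.
  by move: yS; have := other_nbr y; rewrite yu vy !inE -orbA => <-; rewrite orbT.
have w_good_out w : adj v w -> w != u ->
    \sum_y [&& y \notin S, adj w y & ~~ frustrated s w y] <= 1.
  move=> vw wu; apply: (unfrustrated_out_le1 (nbr_pos _ vw) vS).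
    by rewrite adj_sym.
  exact: unfrustrated_other_nbr vu fvu vw wu.
have w_bad_out w : adj v w -> w != u ->
    0 < \sum_y [&& y \notin S, adj w y & frustrated s w y].
  move=> vw wu; have [y wy fwy] := frustrated_deg_gt0 (nbr_pos _ vw).
  exact: frustrated_out_gt0 (out_of_S _ _ vw wu wy fwy) wy fwy.
have := cut_count_min S; rewrite !cut_countE !big_set3 ?(adj_neq adj_irr vw1)
  ?(adj_neq adj_irr vw2) // v_good_out.
have := frustrated_out_gt0 uS vu fvu.
have := w_bad_out _ vw1 w1u; have := w_bad_out _ vw2 w2u.
have := w_good_out _ vw1 w1u; have := w_good_out _ vw2 w2u.
lia.
Qed.

End MinimalSwitching.

End Switching.

Theorem theorem3 (V : finType) (adj : rel V) (sigma : {set V} -> int) :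
  simple_graph adj -> cubic adj -> girth_ge4 adj -> sign_fun adj sigma ->
  8 * frustration_index adj sigma <= 3 * #|V|.
Proof.
move=> [adj_sym adj_irr] adj_cubic girth sgn.
have triangle_free := girth4_nbrs_nonadj adj_sym adj_irr girth.
pose s := [arg min_(f < [ffun=> false] : {ffun V -> bool}) frustration_count adj sigma f].
have s_min f : frustration_count adj sigma s <= frustration_count adj sigma f.
  by rewrite /s; case: arg_minnP => // g _; apply.
have deg_le1 := frustrated_deg_le1 adj_sym adj_irr adj_cubic s_min.
set B := [set v | 0 < frustrated_deg adj sigma s v].
have count_B : frustration_count adj sigma s = #|B|.
  rewrite card_set_sum; apply: eq_bigr => v _.
  by move: (deg_le1 v); case: (frustrated_deg _ _ _ _) => [|[]].
have dom_B : 4 * #|B| <= 3 * #|V|.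
  apply: (dominated_card_le (d := 3) adj_sym) => v; first by rewrite adj_cubic.
  rewrite inE => /(frustrated_deg0_nbr adj_sym adj_irr adj_cubic triangle_free s_min).
  by case=> w vw dw; exists w; rewrite // inE dw.
have := card_frustrated_edges sigma adj_sym adj_irr s.
have := frustration_index_le (frustrated_edges_sub adj sigma s)
  (frustrated_edges_balance adj_irr s sgn).
lia.
Qed.
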